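(* Let $G$ be a connected undirected graph on $N\ge2$ nodes with adjacency matrix $A=(a_{ij})$, neighborhoods $\mathcal N_i=\{j:a_{ij}=1\}$, degrees $d_i=\sum_j a_{ij}$ and Laplacian $L=D-A$, $D=\mathrm{diag}(d_1,\dots,d_N)$. Let $w=(w_1,\dots,w_N)^T$ with $w_i>0$ for all $i$. Define the matrix $T$ by $T_{ii}=\big(\sum_{j\in\mathcal N_i}w_j\big)/l_{ii}$ and $T_{ij}=w_j$ for $i\ne j$, and let $\hat W=I-\epsilon\,(T\otimes L)$, where $\otimes$ is entrywise (Hadamard) multiplication. If $0<\epsilon<1/\max_i\big(\sum_{j\in\mathcal N_i}w_j\big)$, then: (1) $\hat W$ is a nonnegative matrix having $w$ as a left eigenvector and $\vec 1=(1,\dots,1)^T$ as a right eigenvector, both for eigenvalue $1$; (2) all eigenvalues of $\hat W$ lie in the closed unit disk; (3) $\hat W$ is primitive.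
   Context: $l_{ii}=d_i$ is the $i$-th diagonal entry of $L$. A matrix is primitive if it is nonnegative and some positive integer power of it has all entries positive. *)

From HB Require Import structures.
From mathcomp Require Import all_boot all_order all_algebra.
From mathcomp Require Import complex.
Set Implicit Arguments. Unset Strict Implicit. Unset Printing Implicit Defensive.
Import Order.TTheory GRing.Theory Num.Theory.
Local Open Scope ring_scope.

Definition sym_irrefl (N : nat) (e : rel 'I_N) : Prop :=
  (forall i j, e i j = e j i) /\ (forall i, ~~ e i i).

Definition connected_graph (N : nat) (e : rel 'I_N) : Prop :=
  forall i j, connect e i j.

Definition adjmx (R : nzRingType) (N : nat) (e : rel 'I_N) : 'M[R]_N :=
  \matrix_(i, j) (e i j)%:R.

Definition degree (R : nzRingType) (N : nat) (e : rel 'I_N) (i : 'I_N) : R :=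
  \sum_j adjmx R e i j.

Definition laplacian (R : nzRingType) (N : nat) (e : rel 'I_N) : 'M[R]_N :=
  diag_mx (\row_i degree R e i) - adjmx R e.

Definition nbsum (R : nzRingType) (N : nat) (e : rel 'I_N) (w : 'rV[R]_N) (i : 'I_N) : R :=
  \sum_(j | adjmx R e i j == 1) w 0 j.

Definition Tmx (R : fieldType) (N : nat) (e : rel 'I_N) (w : 'rV[R]_N) : 'M[R]_N :=
  \matrix_(i, j) (if i == j then nbsum e w i / laplacian R e i i else w 0 j).

Definition What (R : fieldType) (n : nat) (e : rel 'I_n.+1) (w : 'rV[R]_n.+1) (eps : R)
  : 'M[R]_n.+1 :=
  1%:M - eps *: map2_mx *%R (Tmx e w) (laplacian R e).

Definition nonneg_mx (R : numDomainType) (m n : nat) (M : 'M[R]_(m, n)) : Prop :=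
  forall i j, 0 <= M i j.

Definition primitive_mx (R : numDomainType) (n : nat) (M : 'M[R]_n.+1) : Prop :=
  nonneg_mx M /\ exists k : nat, (0 < k)%N /\ forall i j, 0 < (M ^+ k) i j.

From HB Require Import structures.
From mathcomp Require Import all_boot all_order all_algebra.
From mathcomp Require Import complex.
From mathcomp Require Import ring.
Import Order.TTheory GRing.Theory Num.Theory.
Local Open Scope ring_scope.

(* With s := w A the vector of neighbourhood weights, the Hadamard product T o L
   equals diag(s) - A diag(w), so W = I - eps (diag(s) - A diag(w)).  Since A is
   symmetric, w A diag(w) = s diag(w) = w diag(s), which makes w a left fixed
   vector, and A w^T = s^T makes the rows of W sum to 1.  The bound on eps makes
   the diagonal 1 - eps s_i positive and the off-diagonal entries eps a_ij w_j
   nonnegative, positive exactly on edges.  A nonnegative matrix with unit row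
   sums has spectral radius at most 1, and a positive diagonal together with
   connectivity makes W^(N) entrywise positive: a shortest path from i to j
   has at most N - 1 edges and can be padded by loops at i. *)

Section NonnegMatrix.
Variables (R : numDomainType) (n : nat).
Implicit Types A B : 'M[R]_n.+1.

Lemma nonneg_mxM A B : nonneg_mx A -> nonneg_mx B -> nonneg_mx (A * B).
Proof.
by move=> A_ge0 B_ge0 i j; rewrite -mulmxE mxE sumr_ge0 // => l _; rewrite mulr_ge0.
Qed.

Lemma nonneg_mxX A k : nonneg_mx A -> nonneg_mx (A ^+ k).
Proof.
move=> A_ge0; elim: k => [|k IHk] i j; first by rewrite expr0 mxE ler0n.
by rewrite exprS; apply: nonneg_mxM.
Qed.

Lemma nonneg_mxM_ge A B i l j :
  nonneg_mx A -> nonneg_mx B -> A i l * B l j <= (A * B) i j.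
Proof.
move=> A_ge0 B_ge0; rewrite -mulmxE mxE (bigD1 l) //= lerDl.
by rewrite sumr_ge0 // => k _; rewrite mulr_ge0.
Qed.

Lemma nonneg_mxM_gt0 A B i l j :
  nonneg_mx A -> nonneg_mx B -> 0 < A i l -> 0 < B l j -> 0 < (A * B) i j.
Proof.
move=> A_ge0 B_ge0 Ail_gt0 Blj_gt0.
apply: lt_le_trans (nonneg_mxM_ge A B i l j A_ge0 B_ge0).
exact: mulr_gt0.
Qed.

Arguments nonneg_mxX {A} k.
Arguments nonneg_mxM_gt0 {A B i} l {j}.

Section PositiveDiagonal.
Variable A : 'M[R]_n.+1.
Hypotheses (A_ge0 : nonneg_mx A) (diag_gt0 : forall i, 0 < A i i).

Lemma exp_mx_diag_gt0 k i : 0 < (A ^+ k) i i.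
Proof.
elim: k => [|k IHk]; first by rewrite expr0 mxE eqxx ltr01.
by rewrite exprS (nonneg_mxM_gt0 i A_ge0 (nonneg_mxX k A_ge0)).
Qed.

(* A positive diagonal lets a walk idle in place, so a path of length at most
   [k] already forces a positive entry in [A ^+ k]. *)
Lemma exp_mx_path_gt0 {e : rel 'I_n.+1} :
  (forall i j, e i j -> 0 < A i j) ->
  forall p i k, path e i p -> (size p <= k)%N -> 0 < (A ^+ k) i (last i p).
Proof.
move=> edge_gt0; elim=> [|x p IHp] i k /=; first by move=> _ _; apply: exp_mx_diag_gt0.
case: k => // k /andP[eix path_p] size_p.
by rewrite exprS (nonneg_mxM_gt0 x A_ge0 (nonneg_mxX k A_ge0)) ?edge_gt0 ?IHp.
Qed.

Lemma primitive_mx_connected {e : rel 'I_n.+1} :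
  (forall i j, e i j -> 0 < A i j) -> (forall i j, connect e i j) ->
  primitive_mx A.
Proof.
move=> edge_gt0 e_conn; split=> //; exists n.+1; split=> // i j.
have /connectP[p path_p ->] := e_conn i j.
case: (shortenP path_p) => q path_q uniq_q _.
apply: (exp_mx_path_gt0 edge_gt0 _ _ _ path_q).
by have := max_card (mem (i :: q)); rewrite card_ord (card_uniqP uniq_q) /= => /ltnW.
Qed.

End PositiveDiagonal.
End NonnegMatrix.

Arguments primitive_mx_connected {R n A} A_ge0 diag_gt0 {e}.

(* [eigenvalue] refers to row eigenvectors [v *m W = lambda *: v], so the
   bound comes from the l1 norm of [v] and the row sums of [W]. *)
Lemma eigenvalue_stochastic_norm_le1 (R : rcfType) (n : nat) (W : 'M[R]_n) :
  nonneg_mx W -> W *m (const_mx 1 : 'cV[R]_n) = const_mx 1 ->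
  forall lambda : R[i],
    eigenvalue (map_mx (fun x => x%:C%C) W) lambda -> `|lambda| <= 1.
Proof.
move=> W_ge0 /colP rowsum1 lambda /eigenvalueP[v v_eig v_neq0].
have rowsum i : \sum_j (W i j)%:C%C = 1.
  have := rowsum1 i; rewrite !mxE (eq_bigr (W i)) => [Wi1|j _]; last by rewrite mxE mulr1.
  by rewrite -(rmorph_sum (real_complex R)) Wi1.
have coord_le j : `|lambda| * `|v 0 j| <= \sum_i `|v 0 i| * (W i j)%:C%C.
  rewrite -normrM.
  have -> : lambda * v 0 j = \sum_i v 0 i * (W i j)%:C%C.
    by move/rowP: v_eig => /(_ j); rewrite !mxE => <-; apply: eq_bigr => i _; rewrite mxE.
  apply: le_trans (ler_norm_sum _ _ _) _.
  by apply: ler_sum => i _; rewrite normrM (ger0_norm (x := (W i j)%:C%C)) // ler0c.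
have norm_gt0 : 0 < \sum_j `|v 0 j|.
  have [j vj_neq0 | v0] := pickP (fun j => v 0 j != 0).
    rewrite (bigD1 j) //= ltr_wpDr ?normr_gt0 //.
    by rewrite sumr_ge0.
  by case/eqP: v_neq0; apply/rowP => j; rewrite mxE; apply/eqP/negbFE/v0.
rewrite -(ger_pMl _ norm_gt0) mulr_sumr.
apply: le_trans (ler_sum _ (fun j _ => coord_le j)) _.
by rewrite exchange_big /=; under eq_bigr do rewrite -mulr_sumr rowsum mulr1.
Qed.

Lemma mul_rV_diag (R : comPzSemiRingType) (n : nat) (u v : 'rV[R]_n) :
  u *m diag_mx v = v *m diag_mx u.
Proof.
by rewrite !mul_mx_diag; apply/matrixP => i j; rewrite !mxE (ord1 i) mulrC.
Qed.

Lemma diag_mx_mul_const1 (R : pzSemiRingType) (n : nat) (d : 'rV[R]_n) :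
  diag_mx d *m const_mx 1 = d^T.
Proof. by apply/colP => i; rewrite mul_diag_mx !mxE mulr1. Qed.

Section ConsensusMatrix.
Variables (R : numFieldType) (n : nat) (e : rel 'I_n.+1) (w : 'rV[R]_n.+1) (eps : R).
Hypotheses (e_sym : forall i j, e i j = e j i) (e_irrefl : forall i, ~~ e i i).

Local Notation A := (adjmx R e).
Local Notation W := (What e w eps).
Local Notation s := (\row_i nbsum e w i).

Lemma adjmx_tr : A^T = A.
Proof. by apply/matrixP => i j; rewrite !mxE e_sym. Qed.

Lemma nbsumE i : nbsum e w i = \sum_j A i j * w 0 j.
Proof.
rewrite /nbsum big_mkcond /=; apply: eq_bigr => j _; rewrite mxE.
by case: (e i j); rewrite ?eqxx ?mul1r // eq_sym oner_eq0 mul0r.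
Qed.

Lemma nbsum_rowE : s = w *m A.
Proof.
apply/rowP => j; rewrite !mxE nbsumE; apply: eq_bigr => i _.
by rewrite mulrC -{1}adjmx_tr mxE.
Qed.

(* An isolated node has an empty neighbourhood, so the junk value [x / 0 = 0]
   in [T_ii] is harmless. *)
Lemma nbsum_degree0 i : degree R e i = 0 -> nbsum e w i = 0.
Proof.
move=> /eqP; rewrite psumr_eq0 => [/allP A_i0|j _]; last by rewrite mxE ler0n.
rewrite nbsumE big1 // => j _.
by have /eqP -> := A_i0 j (mem_index_enum j); rewrite mul0r.
Qed.

Lemma What_adjE : W = 1%:M - eps *: (diag_mx s - A *m diag_mx w).
Proof.
apply/matrixP => i j; rewrite mul_mx_diag !mxE.
have [<- | _] := eqVneq i j; last by rewrite !mulr0n; ring.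
rewrite (negPf (e_irrefl i)) eqxx !mulr1n mul0r !subr0.
have [deg0 | deg_neq0] := eqVneq (degree R e i) 0.
  by rewrite deg0 mulr0 nbsum_degree0.
by rewrite mulfVK.
Qed.

Lemma What_diag i : W i i = 1 - eps * nbsum e w i.
Proof.
by rewrite What_adjE mul_mx_diag !mxE eqxx (negPf (e_irrefl i)) !mulr1n mul0r subr0.
Qed.

Lemma What_offdiag i j : i != j -> W i j = eps * (A i j * w 0 j).
Proof.
move=> /negPf ne_ij.
by rewrite What_adjE mul_mx_diag !mxE ne_ij !mulr0n !sub0r mulrN opprK.
Qed.

Lemma What_left_eigen : w *m W = w.
Proof.
rewrite What_adjE mulmxBr mulmx1 -scalemxAr mulmxBr mulmxA -nbsum_rowE.
by rewrite mul_rV_diag subrr scaler0 subr0.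
Qed.

Lemma What_right_eigen : W *m (const_mx 1 : 'cV[R]_n.+1) = const_mx 1.
Proof.
rewrite What_adjE mulmxBl mul1mx -scalemxAl mulmxBl -mulmxA !diag_mx_mul_const1.
by rewrite -adjmx_tr -trmx_mul -nbsum_rowE subrr scaler0 subr0.
Qed.

Section Positivity.
Hypotheses (w_gt0 : forall i, 0 < w 0 i) (eps_gt0 : 0 < eps).
Hypothesis eps_nbsum_lt1 : forall i, eps * nbsum e w i < 1.

Lemma What_diag_gt0 i : 0 < W i i.
Proof. by rewrite What_diag subr_gt0. Qed.

Lemma What_edge_gt0 i j : e i j -> 0 < W i j.
Proof.
move=> e_ij; have ne_ij : i != j by apply: contraTneq e_ij => <-; apply: e_irrefl.
by rewrite What_offdiag // mxE e_ij mul1r mulr_gt0.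
Qed.

Lemma What_nonneg : nonneg_mx W.
Proof.
move=> i j; have [<- | ne_ij] := eqVneq i j; first exact/ltW/What_diag_gt0.
by rewrite What_offdiag // !mulr_ge0 ?mxE ?ler0n ?ltW.
Qed.

End Positivity.
End ConsensusMatrix.

Lemma mul_lt1_of_lt_inv_bigmax {R : realFieldType} {I : finType} (f : I -> R) (eps : R) :
  0 < eps -> eps < 1 / \big[Num.max/0]_i f i -> forall i, eps * f i < 1.
Proof.
set M := \big[Num.max/0]_i f i => eps_gt0 eps_lt i.
have M_gt0 : 0 < M.
  rewrite ltNge; apply/negP => M_le0.
  by move: (lt_trans eps_gt0 eps_lt); rewrite div1r ltNge invr_le0 M_le0.
apply: le_lt_trans (_ : eps * M < 1); last by rewrite -ltr_pdivlMr.
by rewrite ler_wpM2l ?(ltW eps_gt0) //; apply: le_bigmax.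
Qed.

Theorem lemma3 (R : rcfType) (n : nat) (e : rel 'I_n.+2) (w : 'rV[R]_n.+2) (eps : R) :
  sym_irrefl e -> connected_graph e ->
  (forall i, 0 < w 0 i) ->
  0 < eps -> eps < 1 / \big[Num.max/0]_(i < n.+2) nbsum e w i ->
  [/\ nonneg_mx (What e w eps),
      w *m What e w eps = w,
      What e w eps *m (const_mx 1 : 'cV[R]_n.+2) = const_mx 1,
      (forall lambda : R[i],
          eigenvalue (map_mx (fun x => x%:C%C) (What e w eps)) lambda ->
          `|lambda| <= 1)
    & primitive_mx (What e w eps)].
Proof.
move=> [e_sym e_irrefl] e_conn w_gt0 eps_gt0 /(mul_lt1_of_lt_inv_bigmax _ _ eps_gt0) eps_lt1.
have W_ge0 : nonneg_mx (What e w eps) by exact: What_nonneg.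
have W_rowsum1 : What e w eps *m (const_mx 1 : 'cV[R]_n.+2) = const_mx 1.
  exact: What_right_eigen.
split=> //.
- exact: What_left_eigen.
- exact: eigenvalue_stochastic_norm_le1.
apply: (primitive_mx_connected W_ge0 _ _ e_conn).
- exact: What_diag_gt0.
- exact: What_edge_gt0.
Qed.
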